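(* Let $R_{approach}=\sup\{R\in\mathbb R: R\le G(R)\}$. Then $R_{static}\le R_{approach}$, where $$R_{static}=\sup_{w\in\Delta_K}\ \min_{i\ne j}\ \sup_{s\in[0,1]}\ -\sum_{a\in[K]}w_a\log\Big(\sum_{x\in\mathcal X}\nu^i_a(x)^s\nu^j_a(x)^{1-s}\Big).$$
   Context: $\mathcal X$ finite; $\Delta_K,\Delta_m$ the probability simplices on $[K],[m]$; $m\ge2$ bandits $\nu^1,\dots,\nu^m$, $\nu^i=(\nu^i_a)_{a\in[K]}$, each $\nu^i_a$ a full-support distribution on $\mathcal X$. For $\beta\in\Delta_m$ let $\phi_a(\beta)=-\log\sum_x\prod_i\nu^i_a(x)^{\beta_i}$, $I(\beta)=\min_a\phi_a(\beta)$, $L(\beta)=\max_a\phi_a(\beta)$. For $i<j$, $b\in[0,1]$, $\beta_{ij}(b)=b\,e_i+(1-b)e_j$. For $R\in\mathbb R$, $M(R)=\{(i,j):i<j,\ \sup_{b}I(\beta_{ij}(b))<R\}$. Define $$G(R)=\begin{cases}+\infty,&R<\min_{i<j}\sup_{b\in[0,1]}I(\beta_{ij}(b)),\\ \sup_{(\tilde\beta_{ij})}\ \inf_{\lambda\in\Delta_{M(R)}}L\Big(\sum_{(i,j)\in M(R)}\lambda_{ij}\tilde\beta_{ij}\Big),&\text{otherwise},\end{cases}$$ where the supremum is over all choices of points $\tilde\beta_{ij}\in\{\beta_{ij}(b):b\in[0,1]\}$ for $(i,j)\in M(R)$, and an infimum over an empty index set is $+\infty$. *)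

From HB Require Import structures.
From mathcomp Require Import all_boot all_order all_algebra.
From mathcomp Require Import all_classical all_reals all_analysis.
Set Implicit Arguments. Unset Strict Implicit. Unset Printing Implicit Defensive.
Import Order.TTheory GRing.Theory Num.Theory.
Local Open Scope classical_set_scope.
Local Open Scope ring_scope.

Section Defs.
Variables (R : realType) (X : finType) (K m : nat).
(* nu i a x = nu^i_a(x), bandit i in [m], arm a in [K], outcome x in X *)
Variable nu : 'I_m -> 'I_K -> X -> R.

Definition simplex (n : nat) : set ('I_n -> R) :=
  [set w | (forall k, 0 <= w k) /\ \sum_(k < n) w k = 1].

Definition phi (a : 'I_K) (beta : 'I_m -> R) : R :=
  - ln (\sum_(x : X) \prod_(i < m) (nu i a x) `^ (beta i)).

(* I(beta) = min_a phi_a(beta), L(beta) = max_a phi_a(beta) (in \bar R;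
   finite as soon as K >= 1) *)
Definition Ifun (beta : 'I_m -> R) : \bar R :=
  \big[Order.min/+oo%E]_(a < K) (phi a beta)%:E.
Definition Lfun (beta : 'I_m -> R) : \bar R :=
  \big[Order.max/-oo%E]_(a < K) (phi a beta)%:E.

Definition beta_ij (i j : 'I_m) (b : R) : 'I_m -> R :=
  fun k => b * (k == i)%:R + (1 - b) * (k == j)%:R.

Definition supI (i j : 'I_m) : \bar R :=
  ereal_sup [set Ifun (beta_ij i j b) | b in `[0, 1]].

Definition Mset (r : R) : {set 'I_m * 'I_m} :=
  [set p : 'I_m * 'I_m | ((p.1 < p.2)%N && (supI p.1 p.2 < r%:E)%E)].

Definition minpair : \bar R :=
  \big[Order.min/+oo%E]_(i < m) \big[Order.min/+oo%E]_(j < m | (i < j)%N) supI i j.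

(* Delta_{M(R)}: lambda indexed by the pairs of M(R) (values outside M(R)
   are irrelevant) *)
Definition DeltaM (r : R) : set ('I_m -> 'I_m -> R) :=
  [set lam | (forall p, p \in Mset r -> 0 <= lam p.1 p.2) /\
             \sum_(p in Mset r) lam p.1 p.2 = 1].

(* choices of tilde beta_ij = beta_ij(bt i j), bt i j in [0,1] *)
Definition choices : set ('I_m -> 'I_m -> R) :=
  [set bt | forall i j, 0 <= bt i j <= 1].

Definition comb (r : R) (lam bt : 'I_m -> 'I_m -> R) : 'I_m -> R :=
  fun k => \sum_(p in Mset r) lam p.1 p.2 * beta_ij p.1 p.2 (bt p.1 p.2) k.

Definition Gfun (r : R) : \bar R :=
  if (r%:E < minpair)%E then +oo%E
  else ereal_sup [set ereal_inf [set Lfun (comb r lam bt) | lam in DeltaM r]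
                 | bt in choices].

Definition R_approach : \bar R :=
  ereal_sup [set r%:E | r in [set r : R | (r%:E <= Gfun r)%E]].

Definition R_static : \bar R :=
  ereal_sup [set \big[Order.min/+oo%E]_(i < m) \big[Order.min/+oo%E]_(j < m | j != i)
      ereal_sup [set (- \sum_(a < K) w a *
                  ln (\sum_(x : X) (nu i a x) `^ s * (nu j a x) `^ (1 - s)))%:E
                | s in `[0, 1]]
    | w in @simplex K].
End Defs.

From Pilot Require Import Defs.
From HB Require Import structures.
From mathcomp Require Import all_boot all_order all_algebra.
From mathcomp Require Import all_classical all_reals all_analysis.
From mathcomp Require Import ring lra.
Import Order.TTheory GRing.Theory Num.Theory.
Local Open Scope classical_set_scope.
Local Open Scope ring_scope.

(* Fix w in the simplex and r below the static value for w.  For every pair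
   i <> j pick s_ij in [0,1] whose weighted Chernoff exponent
   sum_a w_a phi_a(beta_ij(s_ij)) exceeds r, and use these points as the
   choices in G(r).  Each phi_a is concave (log-sum-exp of a linear function
   is convex), and L dominates any w-average of the phi_a, so for every lam
   L(sum_p lam_p beta_p) >= sum_a w_a phi_a(sum_p lam_p beta_p)
                        >= sum_p lam_p sum_a w_a phi_a(beta_p) >= r.
   Hence r <= G(r), so r <= R_approach. *)

Section ConvexityFacts.
Variable R : realType.

Lemma jensen_expR (I : finType) (S : pred I) (l t : I -> R) :
  (forall p, S p -> 0 <= l p) -> \sum_(p | S p) l p = 1 ->
  expR (\sum_(p | S p) l p * t p) <= \sum_(p | S p) l p * expR (t p).
Proof.
move=> l_ge0 l_sum1; set mu := \sum_(p | S p) l p * t p.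
have tangent p : expR mu * (1 + (t p - mu)) <= expR (t p).
  rewrite -[in leRHS](subrK mu (t p)) expRD mulrC ler_wpM2r ?expR_ge0 //.
  exact: expR_ge1Dx.
have <- : \sum_(p | S p) l p * (expR mu * (1 + (t p - mu))) = expR mu.
  rewrite (eq_bigr (fun p => expR mu * l p + expR mu * (l p * t p)
                             - expR mu * mu * l p)) => [|p _]; last by ring.
  by rewrite !big_split /= sumrN -!mulr_sumr l_sum1 -/mu !mulr1 addrK.
by apply: ler_sum => p Sp; rewrite ler_wpM2l ?l_ge0 ?tangent.
Qed.

Variables (X : finType) (x0 : X).

Lemma sum_expR_gt0 (f : X -> R) : 0 < \sum_(x : X) expR (f x).
Proof.
rewrite (bigD1 x0) //= ltr_pwDl ?expR_gt0 //.
by apply: sumr_ge0 => x _; rewrite expR_ge0.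
Qed.

Lemma ln_sum_expR_convex (I : finType) (S : pred I) (l : I -> R) (g : I -> X -> R) :
  (forall p, S p -> 0 <= l p) -> \sum_(p | S p) l p = 1 ->
  ln (\sum_(x : X) expR (\sum_(p | S p) l p * g p x)) <=
  \sum_(p | S p) l p * ln (\sum_(x : X) expR (g p x)).
Proof.
move=> l_ge0 l_sum1.
set G := fun p => \sum_(x : X) expR (g p x).
have G_gt0 p : 0 < G p by apply: sum_expR_gt0.
have normalized_sum :
    \sum_(x : X) \sum_(p | S p) l p * expR (g p x - ln (G p)) = 1.
  rewrite exchange_big /= -[RHS]l_sum1; apply: eq_bigr => p _.
  under eq_bigr => x _ do rewrite expRD expRN lnK ?posrE ?G_gt0 //.
  by rewrite -mulr_sumr -mulr_suml divff ?mulr1 // gt_eqF ?G_gt0.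
have normalized :
    \sum_(x : X) expR (\sum_(p | S p) l p * (g p x - ln (G p))) <= 1.
  rewrite -[leRHS]normalized_sum.
  by apply: ler_sum => x _; apply: jensen_expR.
rewrite -[leRHS]expRK ler_ln ?posrE ?expR_gt0 ?sum_expR_gt0 //.
apply: (@le_trans _ _
   ((\sum_(x : X) expR (\sum_(p | S p) l p * (g p x - ln (G p)))) *
    expR (\sum_(p | S p) l p * ln (G p)))); last by rewrite ler_piMl ?expR_ge0.
rewrite mulr_suml.
apply: ler_sum => x _; rewrite -expRD -big_split /=.
by under [in leRHS]eq_bigr => p _ do rewrite -mulrDr subrK.
Qed.

End ConvexityFacts.

Lemma sum_weighted_le_bigmax {R : realType} {K : nat} (hK : (0 < K)%N)
    (w F : 'I_K -> R) :
  (forall a, 0 <= w a) -> \sum_(a < K) w a = 1 ->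
  ((\sum_(a < K) w a * F a)%:E <= \big[Order.max/-oo%E]_(a < K) (F a)%:E)%E.
Proof.
move=> w_ge0 w_sum1.
case: (arg_maxP F (i0 := Ordinal hK) (P := predT) isT) => a0 _ F_le.
apply: le_trans _ (le_bigmax _ _ a0); rewrite lee_fin.
rewrite -[leRHS]mul1r -w_sum1 mulr_suml; apply: ler_sum => a _.
by rewrite ler_wpM2l ?w_ge0 //; apply: F_le.
Qed.

Lemma lee_fin_approx (R : realType) (x y : \bar R) :
  (forall r : R, (r%:E < x)%E -> (r%:E <= y)%E) -> (x <= y)%E.
Proof.
move=> below; case: x below => [x| |] below; last exact: leNye.
- case: y below => [y| |] below; [|exact: leey|].
  + rewrite lee_fin leNgt; apply/negP => lt_yx.
    by have := below ((x + y) / 2); rewrite !lte_fin lee_fin; lra.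
  + by have := below (x - 1); rewrite lte_fin => /(_ ltac:(lra)).
- case: y below => [y| |] below; [|exact: leey|].
  + by have := below (y + 1) (ltry _); rewrite lee_fin => ?; exfalso; lra.
  + by have := below 0 (ltry _).
Qed.

Section Exponents.
Context {R : realType} {X : finType} {K m : nat}.
Variable nu : 'I_m -> 'I_K -> X -> R.
Hypothesis nu_gt0 : forall i a x, 0 < nu i a x.

Definition loglik (a : 'I_K) (beta : 'I_m -> R) (x : X) : R :=
  \sum_(k < m) beta k * ln (nu k a x).

Lemma phiE a beta : phi nu a beta = - ln (\sum_(x : X) expR (loglik a beta x)).
Proof.
congr (- ln _); apply: eq_bigr => x _; rewrite /loglik expR_sum.
by apply: eq_bigr => k _; rewrite /powR gt_eqF ?nu_gt0.
Qed.

Lemma loglik_sum (I : finType) (S : pred I) (l : I -> R) (B : I -> 'I_m -> R) a x :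
  loglik a (fun k => \sum_(p | S p) l p * B p k) x =
  \sum_(p | S p) l p * loglik a (B p) x.
Proof.
rewrite /loglik; under eq_bigr => k _ do rewrite mulr_suml.
rewrite exchange_big /=; apply: eq_bigr => p _.
by rewrite mulr_sumr; apply: eq_bigr => k _; rewrite mulrA.
Qed.

Lemma phi_concave (x0 : X) {I : finType} (S : pred I) (l : I -> R)
    (B : I -> 'I_m -> R) a :
  (forall p, S p -> 0 <= l p) -> \sum_(p | S p) l p = 1 ->
  \sum_(p | S p) l p * phi nu a (B p) <=
  phi nu a (fun k => \sum_(p | S p) l p * B p k).
Proof.
move=> l_ge0 l_sum1.
have -> : \sum_(p | S p) l p * phi nu a (B p) =
    - \sum_(p | S p) l p * ln (\sum_(x : X) expR (loglik a (B p) x)).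
  by rewrite -sumrN; apply: eq_bigr => p _; rewrite phiE mulrN.
rewrite phiE lerN2; under eq_bigr => x _ do rewrite loglik_sum.
exact: ln_sum_expR_convex.
Qed.

Lemma phi_beta_ij i j s a : i != j ->
  phi nu a (beta_ij i j s) =
  - ln (\sum_(x : X) (nu i a x) `^ s * (nu j a x) `^ (1 - s)).
Proof.
move=> ij; rewrite phiE; congr (- ln _); apply: eq_bigr => x _.
rewrite /powR !gt_eqF ?nu_gt0 // -expRD; congr expR.
rewrite /loglik (bigD1 i) //= (bigD1 j) 1?eq_sym //= big1 => [|k /andP[ki kj]].
  by rewrite /beta_ij !eqxx (negPf ij) eq_sym (negPf ij) /=; ring.
by rewrite /beta_ij (negPf ki) (negPf kj) /=; ring.
Qed.

End Exponents.

Section StaticBelowApproach.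
Context {R : realType} {X : finType} {K m : nat}.
Variable nu : 'I_m -> 'I_K -> X -> R.
Hypothesis (K_gt0 : (0 < K)%N) (nu_gt0 : forall i a x, 0 < nu i a x).
Variable x0 : X.
Context {w : 'I_K -> R}.
Hypothesis w_simplex : simplex w.

Definition weighted_exponent (beta : 'I_m -> R) : R :=
  \sum_(a < K) w a * phi nu a beta.

Definition chernoff_exponent (i j : 'I_m) (s : R) : R :=
  - \sum_(a < K) w a * ln (\sum_(x : X) (nu i a x) `^ s * (nu j a x) `^ (1 - s)).

Lemma weighted_exponent_beta_ij i j s : i != j ->
  weighted_exponent (beta_ij i j s) = chernoff_exponent i j s.
Proof.
move=> ij; rewrite /chernoff_exponent -sumrN; apply: eq_bigr => a _.
by rewrite phi_beta_ij // mulrN.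
Qed.

Variable r : R.
Hypothesis r_lt_static : forall i j, i != j ->
  (r%:E < ereal_sup [set (chernoff_exponent i j s)%:E | s in `[0%R, 1%R]])%E.

Lemma exists_choices_exponent_gt : exists2 bt, choices bt &
  forall i j, i != j -> r < weighted_exponent (beta_ij i j (bt i j)).
Proof.
have pick (ij : 'I_m * 'I_m) : exists s, 0 <= s <= 1 /\
    (ij.1 != ij.2 -> r < weighted_exponent (beta_ij ij.1 ij.2 s)).
  case: ij => i j /=; have [_|ij] := eqVneq i j; first by exists 0; rewrite lexx ler01.
  have [_ [s s01 <-]] := ereal_sup_gt (r_lt_static i j ij).
  rewrite lte_fin => r_lt; exists s; split; first by move: s01; rewrite /= in_itv.
  by rewrite weighted_exponent_beta_ij.
have [f f_spec] := choice pick.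
exists (fun i j => f (i, j)) => [i j|i j ij]; first by case: (f_spec (i, j)).
by case: (f_spec (i, j)) => _ /(_ ij).
Qed.

Lemma le_Lfun_comb bt lam : DeltaM nu r lam ->
  (forall i j, i != j -> r < weighted_exponent (beta_ij i j (bt i j))) ->
  (r%:E <= Defs.Lfun nu (comb nu r lam bt))%E.
Proof.
move=> [lam_ge0 lam_sum1] bt_gt.
have [w_ge0 w_sum1] := w_simplex.
apply: le_trans _ (sum_weighted_le_bigmax K_gt0 w _ w_ge0 w_sum1); rewrite lee_fin.
set B := fun p : 'I_m * 'I_m => beta_ij p.1 p.2 (bt p.1 p.2).
have r_le_pair p : p \in Mset nu r -> r <= weighted_exponent (B p).
  rewrite inE => /andP[lt_p _]; apply/ltW/bt_gt.
  by apply/eqP => e; rewrite e ltnn in lt_p.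
have averaged : r <= \sum_(p in Mset nu r) lam p.1 p.2 * weighted_exponent (B p).
  rewrite -[leLHS]mul1r -lam_sum1 mulr_suml.
  by apply: ler_sum => p Mp; rewrite ler_wpM2l ?lam_ge0 ?r_le_pair.
apply: le_trans averaged _; rewrite /weighted_exponent.
under eq_bigr => p _ do rewrite mulr_sumr.
rewrite exchange_big /=; apply: ler_sum => a _.
under eq_bigr => p _ do rewrite mulrCA.
rewrite -mulr_sumr ler_wpM2l ?w_ge0 //.
exact: (phi_concave nu nu_gt0 x0 (fun p => p \in Mset nu r)
  (fun p => lam p.1 p.2) B a lam_ge0 lam_sum1).
Qed.

Lemma le_Gfun : (r%:E <= Gfun nu r)%E.
Proof.
rewrite /Gfun; case: ifP => _; first exact: leey.
have [bt bt_choices bt_gt] := exists_choices_exponent_gt.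
apply: le_ereal_sup_tmp; exists (ereal_inf [set Defs.Lfun nu (comb nu r lam bt)
  | lam in DeltaM nu r]); first by exists bt.
apply: le_ereal_inf_tmp => _ [lam lam_Delta <-].
exact: le_Lfun_comb.
Qed.

End StaticBelowApproach.

Theorem mainTheorem17 (R : realType) (X : finType) (K m : nat)
    (nu : 'I_m -> 'I_K -> X -> R)
    (hm : (2 <= m)%N) (hK : (0 < K)%N)
    (hpos : forall i a x, 0 < nu i a x)
    (hsum : forall i a, \sum_(x : X) nu i a x = 1) :
  (R_static nu <= R_approach nu)%E.
Proof.
have x0 : X.
  case: (pickP (@predT X)) => [x _ //|X_empty].
  have := hsum (Ordinal (ltnW hm)) (Ordinal hK).
  by rewrite big_pred0 // => /esym/eqP; rewrite oner_eq0.
apply/ereal_supP => _ [w w_simplex <-]; apply: lee_fin_approx => r r_lt.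
apply: ereal_sup_ubound; exists r => //=.
apply: (le_Gfun nu hK hpos x0 w_simplex) => i j ij.
have ji : j != i by rewrite eq_sym.
exact: lt_le_trans r_lt (le_trans (bigmin_le _ i _)
  (@bigmin_le_cond _ _ _ _ j (fun j0 => j0 != i) _ ji)).
Qed.
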